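(* Let $P\in\Omega[y_0,\ldots,y_n]$ be non-zero and let $r(x)=c_0x^{\nu_0}+\cdots+c_kx^{\nu_k}$ be a generalized polynomial ($c_i\ne0$, $\nu_0<\cdots<\nu_k$). Put $P_0=P$, $P_{i+1}=P_i[c_ix^{\nu_i}]$ for $i=0,\ldots,k$, and $Q=P[r(x)]=P_{k+1}$. Then $r(x)$ is admissible for $P$ if and only if the lowest point of $E_{\nu_k}(Q)$ has height (ordinate) greater than or equal to $1$.
   Context: $\Omega$: field of generalized power series $\sum_{i\ge1}c_ix^{\mu_i}$, $c_i\in\mathbb{C}$, $\mu_i\in\mathbb{R}$ strictly increasing, $\mu_i\to\infty$ if infinitely many terms. The operator $'$ is one fixed choice among: (a) $\frac{d}{dx}$ (set $\varepsilon=1$, $[\mu]=\mu$, $T^{\langle e_\kappa\rangle}=T(T-1)\cdots(T-\kappa+1)$); (b) $x\frac{d}{dx}$ ($\varepsilon=0$, $[\mu]=\mu$, $T^{\langle e_\kappa\rangle}=T^\kappa$); (c) $s'(x)=s(qx)$, $\sum c_ix^{\mu_i}\mapsto\sum c_iq^{\mu_i}x^{\mu_i}$, fixed $q\in\mathbb{C}$, $|q|\ne1$ ($\varepsilon=0$, $[\mu]=q^\mu$, $T^{\langle e_\kappa\rangle}=T^\kappa$). For $\rho\in\mathbb{Z}_{\ge0}^{n+1}$: $|\rho|=\sum\rho_\kappa$, $\omega(\rho)=\sum\kappa\rho_\kappa$, $T^{\langle\rho\rangle}=\prod_\kappa (T^{\langle e_\kappa\rangle})^{\rho_\kappa}$,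 $y^\rho=\prod y_\kappa^{\rho_\kappa}$. Full substitution: $P[s]=P(s+y_0,s'+y_1,\ldots,s^{(n)}+y_n)$. Write uniquely $P=\sum_\rho\sum_\alpha P_{(\alpha,\rho)}x^{\alpha+\varepsilon\omega(\rho)}y^\rho$ with $P_{(\alpha,\rho)}\in\mathbb{C}$. Cloud: $\mathcal{C}(P)=\{(\alpha,h): P_{(\alpha,\rho)}\ne0$ for some $|\rho|=h\}$. Newton polygon $\mathcal{N}(P)$: convex hull of $\bigcup_{V\in\mathcal{C}(P)}(V+\mathbb{R}_{\ge0}\times\{0\})$. For $\mu\in\mathbb{R}$, $L_\mu(P)$ is the line $\{\mu h+\alpha=\alpha_0\}$ with $\alpha_0$ minimal such that it meets $\mathcal{N}(P)$, and $E_\mu(P)=L_\mu(P)\cap\mathcal{N}(P)$ (a vertex or a side). Characteristic polynomial: $\Phi_{(P;\mu)}(C)=\sum_{(\alpha,|\rho|)\in E_\mu(P)}P_{(\alpha,\rho)}\,T^{\langle\rho\rangle}|_{T=[\mu]}\,C^{|\rho|}$. $r$ is admissible for $P$ if $\Phi_{(P_i;\nu_i)}(c_i)=0$ for $i=0,\ldots,k$. *)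

From HB Require Import structures.
From mathcomp Require Import all_boot all_order all_algebra.
From mathcomp Require Import all_classical all_reals all_analysis.
From mathcomp Require Export complex.
Set Implicit Arguments. Unset Strict Implicit. Unset Printing Implicit Defensive.
Import Order.TTheory GRing.Theory Num.Theory.
Local Open Scope ring_scope.
Local Open Scope classical_set_scope.

Section GPS.
Variable R : realType.
Local Notation C := R[i].
Local Notation "x %:C" := (real_complex R x) (at level 1, format "x %:C").

Definition cexp (z : C) : C :=
  let: Complex a b := z in Complex (expR a * cos b) (expR a * sin b).

(* Generalized power series: a series sum_i c_i x^{mu_i} is encoded by
   its coefficient function f : R -> C (f mu = coefficient of x^mu).
   Membership in Omega: the support is finite below every bound, i.e.
   it is finite or a strictly increasing sequence tending to +oo.    *)
Definition ser := R -> C.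

Definition is_gps (f : ser) : Prop :=
  forall M : R, finite_set [set a | f a != 0 /\ a <= M].

Definition mono (c : C) (nu : R) : ser := fun a => if a == nu then c else 0.
Definition sone : ser := mono 1 0.
Definition sadd (f g : ser) : ser := fun a => f a + g a.
Definition smul (f g : ser) : ser :=
  fun g0 => \sum_(a \in [set a | f a != 0 /\ g (g0 - a) != 0]) f a * g (g0 - a).
Definition spow (f : ser) (m : nat) : ser := iter m (smul f) sone.

(* The three operators '.  For (c) q is given as q = cexp lam, and
   q^mu := cexp (mu * lam) (a fixed determination of the power).     *)
Inductive opkind :=
| OpDeriv
| OpEuler
| OpQ of C.             (* (c)  s(x) |-> s(q x), q = cexp lam *)

Definition op_ok (o : opkind) : Prop :=
  match o with OpQ lam => `|cexp lam| != 1 | _ => True end.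

Definition eps (o : opkind) : R := match o with OpDeriv => 1 | _ => 0 end.

Definition brk (o : opkind) (mu : R) : C :=
  match o with OpQ lam => cexp (mu%:C * lam) | _ => mu%:C end.

Definition sop (o : opkind) (f : ser) : ser :=
  match o with
  | OpDeriv => fun a => (a + 1)%:C * f (a + 1)
  | OpEuler => fun a => a%:C * f a
  | OpQ lam => fun a => cexp (a%:C * lam) * f a
  end.

Definition Te (o : opkind) (kappa : nat) (t : C) : C :=
  match o with
  | OpDeriv => \prod_(j < kappa) (t - j%:R)
  | _ => t ^+ kappa
  end.

(* Differential polynomials P in Omega[y_0,...,y_n]:
   P rho = the coefficient (in Omega) of y^rho, rho in N^{n+1}.      *)
Variable n : nat.
Definition mexp := {ffun 'I_n.+1 -> nat}.
Definition dpoly := mexp -> ser.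

Definition msize (rho : mexp) : nat := (\sum_(k < n.+1) rho k)%N.
Definition mweight (rho : mexp) : nat := (\sum_(k < n.+1) k * rho k)%N.
Definition mzero : mexp := [ffun _ => 0%N].
Definition munit (k : 'I_n.+1) : mexp := [ffun j => nat_of_bool (j == k)].

Definition dsupp (P : dpoly) : set mexp := [set rho | exists a, P rho a != 0].

Definition is_dpoly (P : dpoly) : Prop :=
  finite_set (dsupp P) /\ forall rho, is_gps (P rho).

Definition dpoly_nonzero (P : dpoly) : Prop := exists rho a, P rho a != 0.

Definition pone : dpoly := fun rho => if rho == mzero then sone else (fun _ => 0).
Definition pmul (A B : dpoly) : dpoly := fun rho g0 =>
  \sum_(r1 \in [set r1 : mexp | forall j, (r1 j <= rho j)%N])
     smul (A r1) (B [ffun j => (rho j - r1 j)%N]) g0.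
Definition ppow (A : dpoly) (m : nat) : dpoly := iter m (pmul A) pone.
Definition pscale (f : ser) (A : dpoly) : dpoly := fun rho => smul f (A rho).

Definition pshift (o : opkind) (s : ser) (k : 'I_n.+1) : dpoly :=
  fun rho => if rho == mzero then iter k (sop o) s
             else if rho == munit k then sone else (fun _ => 0).

(* full substitution P[s] = P(s + y_0, s' + y_1, ..., s^(n) + y_n) *)
Definition subst (o : opkind) (P : dpoly) (s : ser) : dpoly := fun rho g0 =>
  \sum_(sg \in dsupp P)
     pscale (P sg) (\big[pmul/pone]_(k < n.+1) ppow (pshift o s k) (sg k)) rho g0.

(* P = sum_rho sum_alpha P_(alpha,rho) x^(alpha + eps*omega(rho)) y^rho *)
Definition pcoef (o : opkind) (P : dpoly) (alpha : R) (rho : mexp) : C :=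
  P rho (alpha + eps o * (mweight rho)%:R).

Definition cloud (o : opkind) (P : dpoly) : set (R * R) :=
  [set p | exists rho, pcoef o P p.1 rho != 0 /\ p.2 = (msize rho)%:R].

Definition convex2 (A : set (R * R)) : Prop :=
  forall p q (t : R), 0 <= t <= 1 -> A p -> A q ->
    A (t * p.1 + (1 - t) * q.1, t * p.2 + (1 - t) * q.2).

Definition hull2 (S : set (R * R)) : set (R * R) :=
  [set p | forall A, convex2 A -> S `<=` A -> A p].

Definition newton (o : opkind) (P : dpoly) : set (R * R) :=
  hull2 [set p | exists v, cloud o P v /\ v.1 <= p.1 /\ p.2 = v.2].

Definition Eface (o : opkind) (P : dpoly) (mu : R) : set (R * R) :=
  [set p | newton o P p /\
     forall q, newton o P q -> mu * p.2 + p.1 <= mu * q.2 + q.1].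

Definition charpoly (o : opkind) (P : dpoly) (mu : R) : {poly C} :=
  \sum_(ar \in [set ar : R * mexp | pcoef o P ar.1 ar.2 != 0 /\
                                    Eface o P mu (ar.1, (msize ar.2)%:R)])
     (pcoef o P ar.1 ar.2 *
      \prod_(k < n.+1) Te o k (brk o mu) ^+ (ar.2 k)) *: 'X^(msize ar.2).

Fixpoint Pseq (o : opkind) (P : dpoly) (c : nat -> C) (nu : nat -> R) (i : nat)
  : dpoly :=
  match i with
  | 0 => P
  | i'.+1 => subst o (Pseq o P c nu i') (mono (c i') (nu i'))
  end.

Definition admissible (o : opkind) (P : dpoly) (k : nat) (c : nat -> C)
  (nu : nat -> R) : Prop :=
  forall i, (i <= k)%N -> root (charpoly o (Pseq o P c nu i) (nu i)) (c i).

Definition lowest_point_ge1 (o : opkind) (Q : dpoly) (mu : R) : Prop :=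
  exists p, Eface o Q mu p /\ (forall q, Eface o Q mu q -> p.2 <= q.2) /\ 1 <= p.2.

End GPS.

(* If s = c x^nu, each y_k in P[s] is shifted by s^(k) = c T^<e_k>([nu]) x^(nu - eps k),
   so a cloud point (alpha, |sigma|) of P only spreads to points (alpha', |rho|),
   rho <= sigma, of the same nu-level nu |rho| + alpha'.  Hence P[c x^nu] has the same
   minimal nu-level L as P, and its coefficient at (L, 0) collects exactly the
   contributions P_(alpha,sigma) c^|sigma| prod_k T^<e_k>([nu])^sigma_k of the points of
   E_nu(P): it is Phi_(P;nu)(c).  So the lowest point of E_nu(P[c x^nu]) has height
   >= 1 iff Phi_(P;nu)(c) = 0, which is the condition at i = k.  If instead c_i is not
   a root for some i < k, the point (L, 0) of P_(i+1) is never cancelled afterwards: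
   for the steeper slopes nu_(i+1) < ... < nu_k every other point lies strictly above
   the supporting line through it, so E_(nu_k)(Q) keeps a point of height 0. *)

From Pilot Require Import Defs.
From HB Require Import structures.
From mathcomp Require Import all_boot all_order all_algebra.
From mathcomp Require Import all_classical all_reals all_analysis.
From mathcomp Require Import complex finmap.
From mathcomp Require Import ring lra zify.
Set Implicit Arguments. Unset Strict Implicit. Unset Printing Implicit Defensive.
Import Order.TTheory GRing.Theory Num.Theory.
Local Open Scope ring_scope.
Local Open Scope classical_set_scope.

Lemma finite_set_argmin (T : choiceType) (d : Order.disp_t) (U : orderType d)
    (A : set T) (f : T -> U) (x0 : T) :
  finite_set A -> A x0 -> exists2 x, A x & forall y, A y -> (f x <= f y)%O.
Proof.
move=> finA Ax0; have x0A : x0 \in fset_set A by rewrite in_fset_set // mem_set.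
have [[x xA] _ xmin] :=
  arg_minP (i0 := [` x0A]%fset) (P := predT) (fun x => f (val x)) isT.
exists x; first by move: (xA); rewrite in_fset_set // => /set_mem.
move=> y Ay; have yA : y \in fset_set A by rewrite in_fset_set // mem_set.
exact: (xmin [` yA]%fset).
Qed.

Lemma fsbig_single (K : nmodType) (T : choiceType) (A : set T) (F : T -> K) (x0 : T) :
  (forall x, A x -> x <> x0 -> F x = 0) -> (~ A x0 -> F x0 = 0) ->
  \sum_(x \in A) F x = F x0.
Proof.
move=> F0 Fx0; rewrite (fsbig_widen A (A `|` [set x0]) F); last 2 first.
- by move=> x Ax; left.
- by move=> x [[Ax|ex] nAx] //; rewrite /= ex Fx0 // -ex.
rewrite -(fsbig_widen [set x0] (A `|` [set x0]) F) ?fsbig_set1 //.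
by move=> x [[Ax|ex] nx] //; rewrite /= F0.
Qed.

Lemma fsbig_neq0 (K : nmodType) (T : choiceType) (A : set T) (F : T -> K) :
  \sum_(x \in A) F x != 0 -> exists2 x, A x & F x != 0.
Proof. by move=> /(@fsbigN1 _ _ _ unit _ A (fun=> F) tt). Qed.

Section MultiIndex.
Variable n : nat.
Implicit Types a b r s rho : mexp n.
Local Notation mz := (Defs.mzero n).

Definition mle a b := forall j, (a j <= b j)%N.
Definition madd a b : mexp n := [ffun j => (a j + b j)%N].
Definition msub a b : mexp n := [ffun j => (a j - b j)%N].
Definition mscale (e : nat) a : mexp n := [ffun j => (e * a j)%N].

Lemma msizeD a b : msize (madd a b) = (msize a + msize b)%N.
Proof. by rewrite /msize -big_split; apply: eq_bigr => j _; rewrite ffunE. Qed.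

Lemma mweightD a b : mweight (madd a b) = (mweight a + mweight b)%N.
Proof. by rewrite /mweight -big_split; apply: eq_bigr => j _; rewrite ffunE mulnDr. Qed.

Lemma msize0 : msize mz = 0%N.
Proof. by rewrite /msize big1 // => j _; rewrite ffunE. Qed.

Lemma mweight0 : mweight mz = 0%N.
Proof. by rewrite /mweight big1 // => j _; rewrite ffunE muln0. Qed.

Lemma msize_munit (k : 'I_n.+1) : msize (munit k) = 1%N.
Proof.
rewrite /msize (bigD1 k) //= ffunE eqxx big1 // => j /negbTE jk.
by rewrite ffunE jk.
Qed.

Lemma mweight_munit (k : 'I_n.+1) : mweight (munit k) = k.
Proof.
rewrite /mweight (bigD1 k) //= ffunE eqxx muln1 big1 ?addn0 // => j /negbTE jk.
by rewrite ffunE jk muln0.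
Qed.

Lemma munit_neq0 (k : 'I_n.+1) : munit k != mz.
Proof. by apply/eqP => /ffunP /(_ k); rewrite !ffunE eqxx. Qed.

Lemma msize_eq0 a : (msize a == 0%N) = (a == mz).
Proof.
apply/idP/eqP => [|->]; last by rewrite msize0.
rewrite /msize sum_nat_eq0 => /forallP a0.
by apply/ffunP => j; rewrite ffunE; apply/eqP; apply: (implyP (a0 j)).
Qed.

Lemma msubKC r rho : mle r rho -> madd r (msub rho r) = rho.
Proof. by move=> le_r; apply/ffunP => j; rewrite !ffunE subnKC. Qed.

Lemma mle0 r : mle r mz -> r = mz.
Proof. by move=> le_r; apply/ffunP => j; move: (le_r j); rewrite !ffunE leqn0 => /eqP. Qed.

Lemma msize_lt a b : mle a b -> a != b -> (msize a < msize b)%N.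
Proof.
move=> le_ab neq_ab.
have [j lt_j] : exists j, (a j < b j)%N.
  apply/existsP; apply: contraR neq_ab => /existsPn ge_ab.
  by apply/eqP/ffunP => j; apply/eqP; rewrite eqn_leq le_ab leqNgt ge_ab.
rewrite -(msubKC le_ab) msizeD -{1}[msize a]addn0 ltn_add2l.
by rewrite /msize (bigD1 j) //= ffunE ltn_addr // subn_gt0.
Qed.

Lemma mle_finite s : finite_set [set r | mle r s].
Proof.
pose g (f : {ffun 'I_n.+1 -> 'I_(msize s).+1}) : mexp n := [ffun j => val (f j)].
apply: (@sub_finite_set _ _ (g @` setT)); last exact/finite_image/finite_finset.
move=> r /= le_r; exists [ffun j => inord (r j)] => //.
apply/ffunP => j; rewrite /g !ffunE /= inordK // ltnS.
by apply: leq_trans (le_r j) _; rewrite /msize (bigD1 j) //= leq_addr.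
Qed.

Definition mconv (K : pzSemiRingType) (f g : mexp n -> K) rho : K :=
  \sum_(r \in [set r | mle r rho]) f r * g (msub rho r).

Section Convolution.
Variables (K : pzSemiRingType) (f g : mexp n -> K) (sf sg : mexp n).
Hypotheses (f_supp : forall r, f r != 0 -> mle r sf)
           (g_supp : forall r, g r != 0 -> mle r sg).

Lemma mconv_term_supp r s : f r * g s != 0 -> mle r sf /\ mle s sg.
Proof.
move=> nz; split; [apply: f_supp | apply: g_supp]; apply: contraNneq nz => ->.
  by rewrite mul0r.
by rewrite mulr0.
Qed.

Lemma mconv_supp rho : mconv f g rho != 0 -> mle rho (madd sf sg).
Proof.
move=> /fsbig_neq0 [r /= le_r] /mconv_term_supp[fr gr] j.
by move: (fr j) (gr j) (le_r j); rewrite !ffunE; lia.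
Qed.

Lemma mconv_lead : mconv f g (madd sf sg) = f sf * g sg.
Proof.
rewrite /mconv (@fsbig_single _ _ _ _ sf).
- by congr (_ * g _); apply/ffunP => j; rewrite !ffunE addKn.
- move=> r /= le_r ne_r; apply/eqP; apply: contraT => /mconv_term_supp[fr gr].
  case: ne_r; apply/ffunP => j.
  move: (fr j) (gr j); rewrite !ffunE.
  (* [lia] does not recognise [r j] at its canonical-structure type as a [nat] atom. *)
  by move: (r j) (sf j) (sg j) => x y z; lia.
- by case => j; rewrite ffunE leq_addr.
Qed.

End Convolution.

Lemma mconv0 (K : pzSemiRingType) (f g : mexp n -> K) : mconv f g mz = f mz * g mz.
Proof.
rewrite /mconv (@fsbig_single _ _ _ _ mz).
- by congr (_ * g _); apply/ffunP => j; rewrite !ffunE.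
- by move=> r /= /mle0.
- by case => j; rewrite ffunE.
Qed.

End MultiIndex.

Section Monomials.
Variable R : realType.
Implicit Types (f : ser R) (c x y : R[i]) (e nu : R).

Lemma smul_monor f x e g0 : smul f (mono x e) g0 = f (g0 - e) * x.
Proof.
rewrite /smul (@fsbig_single _ _ _ _ (g0 - e)) /mono ?subKr ?eqxx //.
- move=> a _ ne_a; case: eqP => [ea|_]; last by rewrite mulr0.
  by case: ne_a; rewrite -ea subKr.
- move=> nA; apply/eqP; apply: contraT; rewrite mulf_eq0 negb_or => /andP[fe xe].
  by case: nA; rewrite /= subKr eqxx.
Qed.

Lemma smul_mono x y e1 e2 : smul (mono x e1) (mono y e2) = mono (x * y) (e1 + e2).
Proof.
apply: funext => g0; rewrite smul_monor /mono.
have -> : (g0 - e2 == e1) = (g0 == e1 + e2) by rewrite subr_eq.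
by case: ifP; rewrite ?mul0r.
Qed.

Lemma mono0 e : mono (0 : R[i]) e = (fun _ => 0).
Proof. by apply: funext => a; rewrite /mono; case: ifP. Qed.

Lemma TeS (o : opkind R) k t :
  Te o k.+1 t = Te o k t * (t - ((eps o * k%:R)%:C)%C).
Proof.
case: o => [||lam] /=; rewrite ?mul0r ?subr0 ?exprSr // big_ord_recr /=.
by rewrite mul1r (rmorph_nat (real_complex R)).
Qed.

Lemma sop_mono (o : opkind R) c nu k :
  sop o (mono c (nu - eps o * k%:R)) =
  mono (c * (brk o nu - ((eps o * k%:R)%:C)%C)) (nu - eps o * k.+1%:R).
Proof.
apply: funext => a; rewrite /sop /mono -[k.+1]addn1 natrD.
case: o => [||lam] /=; rewrite ?mul0r ?subr0 ?mul1r.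
- have -> : (a + 1 == nu - k%:R) = (a == nu - (k%:R + 1)).
    by apply/eqP/eqP => h; lra.
  case: eqP => [->|_]; last by rewrite mulr0.
  by rewrite mulrC -raddfB; congr (_ * (_)%:C)%C; ring.
- by case: eqP => [->|_]; rewrite ?mulr0 // mulrC.
- by case: eqP => [->|_]; rewrite ?mulr0 // mulrC.
Qed.

Lemma iter_sop_mono (o : opkind R) c nu k :
  iter k (sop o) (mono c nu) = mono (c * Te o k (brk o nu)) (nu - eps o * k%:R).
Proof.
elim: k => [|k IH]; first by rewrite /= mulr0 subr0; case: o => *; rewrite /= ?big_ord0 mulr1.
by rewrite iterS IH sop_mono TeS mulrA.
Qed.

End Monomials.

Section Expansion.
Variables (R : realType) (n : nat) (o : opkind R) (nu : R).
Implicit Types (A B : dpoly R n) (a b : mexp n -> R[i]) (rho r s sg : mexp n).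
Local Notation mz := (Defs.mzero n).

(* The x-exponent of y^rho once y_k stands for (x^nu)^(k), a multiple of x^(nu - eps k). *)
Definition mdeg rho : R := nu * (msize rho)%:R - eps o * (mweight rho)%:R.

Lemma mdegD r s : mdeg (madd r s) = mdeg r + mdeg s.
Proof. by rewrite /mdeg msizeD mweightD !natrD; ring. Qed.

Lemma mdeg0 : mdeg mz = 0.
Proof. by rewrite /mdeg msize0 mweight0 !mulr0 subrr. Qed.

Lemma mdeg_munit (k : 'I_n.+1) : mdeg (munit k) = nu - eps o * k%:R.
Proof. by rewrite /mdeg msize_munit mweight_munit mulr1. Qed.

(* [A] = sum_(rho <= s) a rho x^(mdeg s - mdeg rho) y^rho, with a s = 1 and a 0 = v:
   the shape of prod_k ((c x^nu)^(k) + y_k)^(s_k). *)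
Definition expansion A a s (v : R[i]) : Prop :=
  [/\ forall rho, A rho = mono (a rho) (mdeg s - mdeg rho),
      forall rho, a rho != 0 -> mle rho s,
      a s = 1 & a mz = v].

Lemma expansion_coef A a s v :
  expansion A a s v -> expansion A (fun rho => A rho (mdeg s - mdeg rho)) s v.
Proof.
case=> EA a_supp a_lead a0.
have E rho : A rho (mdeg s - mdeg rho) = a rho by rewrite EA /mono eqxx.
by split=> [rho|rho||]; rewrite ?E //; apply: a_supp.
Qed.

Lemma expansion_pone : expansion (@pone R n) (fun rho => (rho == mz)%:R) mz 1.
Proof.
split; rewrite ?eqxx // => rho; rewrite /pone.
  by case: eqP => [->|_]; rewrite ?subrr // mono0.
by have [-> _ j|] := eqVneq rho mz; rewrite ?eqxx.
Qed.

Lemma expansion_pmul A B a b sa sb va vb :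
  expansion A a sa va -> expansion B b sb vb ->
  expansion (pmul A B) (mconv a b) (madd sa sb) (va * vb).
Proof.
move=> [EA a_supp a_lead a0] [EB b_supp b_lead b0]; split.
- move=> rho; apply: funext => g0; rewrite /pmul [in RHS]/mono.
  set e := mdeg (madd sa sb) - mdeg rho.
  transitivity (\sum_(r \in [set r | mle r rho])
                  if g0 == e then a r * b (msub rho r) else 0).
    apply: eq_fsbigr => r /set_mem le_r; rewrite EA EB smul_mono /mono.
    suff -> : mdeg sa - mdeg r + (mdeg sb - mdeg (msub rho r)) = e by [].
    by rewrite /e -(msubKC le_r) !mdegD msubKC //; ring.
  by case: ifP => _; [apply: eq_fsbigr | rewrite fsbig1].
- exact: mconv_supp.
- by rewrite mconv_lead // a_lead b_lead mulr1.
- by rewrite mconv0 a0 b0.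
Qed.

Lemma expansion_pshift c (k : 'I_n.+1) :
  expansion (pshift o (mono c nu) k)
    (fun rho => if rho == mz then c * Te o k (brk o nu) else (rho == munit k)%:R)
    (munit k) (c * Te o k (brk o nu)).
Proof.
split; rewrite ?eqxx ?(negbTE (munit_neq0 k)) // => rho; rewrite /pshift.
  case: eqP => [->|_]; first by rewrite iter_sop_mono mdeg_munit mdeg0 subr0.
  by case: eqP => [->|_]; rewrite ?subrr // mono0.
have [-> _ j|_] := eqVneq rho mz; first by rewrite ffunE.
by have [-> _ j|] := eqVneq rho (munit k); rewrite ?eqxx.
Qed.

Lemma expansion_ppow A a s v e :
  expansion A a s v -> exists a', expansion (ppow A e) a' (mscale e s) (v ^+ e).
Proof.
move=> EA; elim: e => [|e [a' EAe]].
  exists (fun rho => (rho == mz)%:R); rewrite expr0.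
  have -> : mscale 0 s = mz by apply/ffunP => j; rewrite !ffunE.
  exact: expansion_pone.
exists (mconv a a'); rewrite exprS.
have -> : mscale e.+1 s = madd s (mscale e s) by apply/ffunP => j; rewrite !ffunE mulSn.
exact: expansion_pmul.
Qed.

Lemma expansion_big_pshift c sg (r : seq 'I_n.+1) : exists a, expansion
    (\big[@pmul R n/@pone R n]_(k <- r) ppow (pshift o (mono c nu) k) (sg k))
    a [ffun j => (count_mem j r * sg j)%N] (\prod_(k <- r) (c * Te o k (brk o nu)) ^+ sg k).
Proof.
elim: r => [|k r [a Ea]].
  exists (fun rho => (rho == mz)%:R); rewrite !big_nil.
  have -> : [ffun j => (count_mem j [::] * sg j)%N] = mz by apply/ffunP => j; rewrite !ffunE.
  exact: expansion_pone.
have [b Eb] := expansion_ppow (sg k) (expansion_pshift c k).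
exists (mconv b a); rewrite !big_cons.
have -> : [ffun j => (count_mem j (k :: r) * sg j)%N] =
    madd (mscale (sg k) (munit k)) [ffun j => (count_mem j r * sg j)%N].
  apply/ffunP => j; rewrite !ffunE /=.
  by case: (eqVneq k j) => [->|ne]; rewrite ?muln1 ?mulnDl ?mul1n ?muln0 ?add0n.
exact: expansion_pmul.
Qed.

Definition yterm (f : ser R) sg : dpoly R n :=
  \big[@pmul R n/@pone R n]_(k < n.+1) ppow (pshift o f k) (sg k).

Definition ycoef c sg rho : R[i] := yterm (mono c nu) sg rho (mdeg sg - mdeg rho).

Lemma expansion_yterm c sg :
  expansion (yterm (mono c nu) sg) (ycoef c sg) sg
    (\prod_(k < n.+1) (c * Te o k (brk o nu)) ^+ sg k).
Proof.
have [a Ea] := expansion_big_pshift c sg (index_enum 'I_n.+1).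
have count_sg : [ffun j => (count_mem j (index_enum 'I_n.+1) * sg j)%N] = sg.
  by apply/ffunP => j; rewrite ffunE count_uniq_mem ?index_enum_uniq ?mem_index_enum ?mul1n.
by rewrite count_sg in Ea; apply: expansion_coef Ea.
Qed.

Lemma ytermE c sg rho :
  yterm (mono c nu) sg rho = mono (ycoef c sg rho) (mdeg sg - mdeg rho).
Proof. by case: (expansion_yterm c sg). Qed.

Lemma ycoef_supp c sg rho : ycoef c sg rho != 0 -> mle rho sg.
Proof. by case: (expansion_yterm c sg) => _ supp _ _; apply: supp. Qed.

Lemma ycoef_lead c sg : ycoef c sg sg = 1.
Proof. by case: (expansion_yterm c sg). Qed.

Lemma ycoef0 c sg : ycoef c sg mz = \prod_(k < n.+1) (c * Te o k (brk o nu)) ^+ sg k.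
Proof. by case: (expansion_yterm c sg). Qed.

End Expansion.

Section NewtonPolygon.
Variables (R : realType) (n : nat) (o : opkind R) (nu : R).
Implicit Types (P : dpoly R n) (alpha L h : R) (rho : mexp n) (p : R * R).
Local Notation mz := (Defs.mzero n).

Definition is_min_level P L :=
  (forall alpha rho, pcoef o P alpha rho != 0 -> L <= nu * (msize rho)%:R + alpha) /\
  exists alpha rho, pcoef o P alpha rho != 0 /\ nu * (msize rho)%:R + alpha = L.

Lemma convex2_level_face L h :
  convex2 [set p | L <= nu * p.2 + p.1 /\ (nu * p.2 + p.1 = L -> h <= p.2)].
Proof.
move=> p q t /andP[t0 t1] [Lp hp] [Lq hq] /=.
have -> : nu * (t * p.2 + (1 - t) * q.2) + (t * p.1 + (1 - t) * q.1) =
          t * (nu * p.2 + p.1) + (1 - t) * (nu * q.2 + q.1) by ring.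
split=> [|eqL]; first by nra.
have /eqP : t * (nu * p.2 + p.1 - L) = 0 by nra.
have /eqP : (1 - t) * (nu * q.2 + q.1 - L) = 0 by nra.
rewrite !mulf_eq0 !subr_eq0 => /orP[/eqP t1'|/eqP/hq hq'] /orP[/eqP t0'|/eqP/hp hp'];
  nra.
Qed.

Lemma newton_cloud P alpha rho :
  pcoef o P alpha rho != 0 -> newton o P (alpha, (msize rho)%:R).
Proof. by move=> nz A _; apply; exists (alpha, (msize rho)%:R); split => //; exists rho. Qed.

Lemma newton_level P L h :
  (forall alpha rho, pcoef o P alpha rho != 0 ->
     L <= nu * (msize rho)%:R + alpha /\
     (nu * (msize rho)%:R + alpha = L -> h <= (msize rho)%:R)) ->
  forall p, newton o P p -> L <= nu * p.2 + p.1 /\ (nu * p.2 + p.1 = L -> h <= p.2).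
Proof.
move=> cloudP p Np; apply: (Np _ (@convex2_level_face L h)).
move=> q [v [[rho [nz_rho v2]] [le_vq q2]]]; have [Lv hv] := cloudP _ _ nz_rho.
rewrite /= q2 v2.
by split=> [|eqL]; [lra | apply: hv; lra].
Qed.

Section MinLevel.
Variables (P : dpoly R n) (L : R).
Hypothesis minP : is_min_level P L.

Lemma min_level_newton p : newton o P p -> L <= nu * p.2 + p.1.
Proof.
move=> Np; apply: (proj1 (newton_level (h := 0) _ Np)) => alpha rho nz.
by split=> [|_]; [exact: minP.1 | exact: ler0n].
Qed.

Lemma Eface_level p : Eface o P nu p -> nu * p.2 + p.1 = L.
Proof.
case: minP => _ [alpha [rho [nz eqL]]] [Np minp].
by have := minp _ (newton_cloud nz); have := min_level_newton Np; rewrite /=; lra.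
Qed.

Lemma Eface_cloudE alpha rho : pcoef o P alpha rho != 0 ->
  Eface o P nu (alpha, (msize rho)%:R) <-> nu * (msize rho)%:R + alpha = L.
Proof.
move=> nz; split; first exact: Eface_level.
by move=> eqL; split=> [|q /min_level_newton]; [apply: newton_cloud | rewrite /= eqL].
Qed.

Lemma Eface_height h :
  (forall alpha rho, pcoef o P alpha rho != 0 ->
     nu * (msize rho)%:R + alpha = L -> h <= (msize rho)%:R) ->
  forall p, Eface o P nu p -> h <= p.2.
Proof.
move=> hP p Ep; have [Np _] := Ep.
apply: (proj2 (newton_level _ Np)) (Eface_level Ep) => alpha rho nz.
by split; [exact: minP.1 | exact: hP].
Qed.

Lemma lowest_point_ge1_iff : lowest_point_ge1 o P nu <-> pcoef o P L mz = 0.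
Proof.
split=> [[p [_ [lowp p1]]]|L0].
  apply/eqP; apply: contraT => nz.
  have /lowp : Eface o P nu (L, (msize mz)%:R) by apply/Eface_cloudE; rewrite ?msize0 ?mulr0 ?add0r.
  by rewrite /= msize0; lra.
pose onL m := `[< exists alpha rho, [/\ pcoef o P alpha rho != 0,
                   nu * (msize rho)%:R + alpha = L & msize rho = m] >].
have exL : exists m, onL m.
  by have [_ [alpha [rho [nz eqL]]]] := minP; exists (msize rho); apply/asboolP; exists alpha, rho.
case: (ex_minnP exL) => m /asboolP[alpha [rho [nz eqL <-]]] minh.
exists (alpha, (msize rho)%:R); split; first exact/Eface_cloudE.
split=> [q|]; first apply: Eface_height => beta sg nz' eqL'.
  by rewrite ler_nat; apply: minh; apply/asboolP; exists beta, sg.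
rewrite /= ler1n lt0n msize_eq0; apply: contraTneq nz => rho0.
by move: eqL; rewrite rho0 msize0 mulr0 add0r => ->; rewrite L0 eqxx.
Qed.

Lemma min_level_nonzero : dpoly_nonzero P.
Proof.
have [_ [alpha [rho [nz _]]]] := minP.
by exists rho, (alpha + eps o * (mweight rho)%:R).
Qed.

End MinLevel.

Lemma exists_min_level P : is_dpoly P -> dpoly_nonzero P -> exists L, is_min_level P L.
Proof.
move=> [finP gpsP] [rho0 [a0 nz0]].
pose B := nu * (msize rho0)%:R + (a0 - eps o * (mweight rho0)%:R).
pose below := [set ar : R * mexp n | pcoef o P ar.1 ar.2 != 0 /\
                                     nu * (msize ar.2)%:R + ar.1 <= B].
have fin_below : finite_set below.
  apply: (@sub_finite_set _ _ (\bigcup_(rho in dsupp P)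
     [set (b - eps o * (mweight rho)%:R, rho) | b in
        [set b | P rho b != 0 /\ b <= B - nu * (msize rho)%:R + eps o * (mweight rho)%:R]])).
    move=> [alpha rho] [/= nz le_B]; exists rho; first by exists (alpha + eps o * (mweight rho)%:R).
    exists (alpha + eps o * (mweight rho)%:R); first by split => //; lra.
    by congr pair; lra.
  by apply: bigcup_finite => // rho _; apply/finite_image/gpsP.
have below0 : below (a0 - eps o * (mweight rho0)%:R, rho0) by split; rewrite /pcoef ?subrK.
have [[alpha rho] [/= nz le_B] minar] :=
  finite_set_argmin (fun ar : R * mexp n => nu * (msize ar.2)%:R + ar.1) fin_below below0.
exists (nu * (msize rho)%:R + alpha); split; last by exists alpha, rho.
move=> beta sg nz'; have [le_sg|lt_sg] := lerP (nu * (msize sg)%:R + beta) B.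
  by apply: (minar (beta, sg)).
exact: le_trans le_B (ltW lt_sg).
Qed.

End NewtonPolygon.

Section MonomialSubstitution.
Variables (R : realType) (n : nat) (o : opkind R) (nu : R).
Implicit Types (P : dpoly R n) (c : R[i]) (alpha L : R) (rho sg : mexp n).
Local Notation mz := (Defs.mzero n).

Lemma subst_monoE P c rho g0 :
  subst o P (mono c nu) rho g0 =
  \sum_(sg \in dsupp P) P sg (g0 - (mdeg o nu sg - mdeg o nu rho)) * ycoef o nu c sg rho.
Proof.
apply: eq_fsbigr => sg _.
by rewrite /pscale -/(yterm o (mono c nu) sg) ytermE smul_monor.
Qed.

Lemma pcoef_subst_mono P c alpha rho :
  pcoef o (subst o P (mono c nu)) alpha rho =
  \sum_(sg \in dsupp P)
     pcoef o P (alpha + nu * (msize rho)%:R - nu * (msize sg)%:R) sg * ycoef o nu c sg rho.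
Proof.
rewrite /pcoef subst_monoE; apply: eq_fsbigr => sg _.
by congr (P sg _ * _); rewrite /mdeg; ring.
Qed.

Lemma subst_mono_dpoly P c : is_dpoly P -> is_dpoly (subst o P (mono c nu)).
Proof.
move=> [finP gpsP]; split=> [|rho M].
  apply: (@sub_finite_set _ _ (\bigcup_(sg in dsupp P) [set r | mle r sg])); last first.
    by apply: bigcup_finite => // sg _; apply: mle_finite.
  move=> rho [g0]; rewrite subst_monoE => /fsbig_neq0 [sg Psg].
  by rewrite mulf_eq0 negb_or => /andP[_ /ycoef_supp]; exists sg.
pose shift sg := mdeg o nu sg - mdeg o nu rho.
apply: (@sub_finite_set _ _ (\bigcup_(sg in dsupp P)
   [set b + shift sg | b in [set b | P sg b != 0 /\ b <= M - shift sg]])).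
  move=> g0 [/= + le_M]; rewrite subst_monoE => /fsbig_neq0 [sg Psg].
  rewrite mulf_eq0 negb_or => /andP[nzP _].
  by exists sg => //; exists (g0 - shift sg); [split => //; lra | rewrite subrK].
by apply: bigcup_finite => // sg _; apply/finite_image/gpsP.
Qed.

(* The level-[L] cloud point of largest height survives the substitution: its
   coefficient only receives contributions from strictly larger y-monomials. *)
Lemma subst_min_level P c L :
  finite_set (dsupp P) -> is_min_level o nu P L ->
  is_min_level o nu (subst o P (mono c nu)) L.
Proof.
move=> finP [lbP [alpha1 [rho1 [nz1 eq1]]]]; split.
  move=> alpha rho; rewrite pcoef_subst_mono => /fsbig_neq0 [sg _].
  by rewrite mulf_eq0 negb_or => /andP[/lbP le_sg _]; lra.
pose onL := [set sg | pcoef o P (L - nu * (msize sg)%:R) sg != 0].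
have fin_onL : finite_set onL.
  apply: sub_finite_set finP => sg nz.
  by exists (L - nu * (msize sg)%:R + eps o * (mweight sg)%:R).
have onL_rho1 : onL rho1 by rewrite /onL /= -eq1 addrC addKr.
have [sg onL_sg max_sg] :=
  finite_set_argmin (fun sg => - (msize sg)%:R : R) fin_onL onL_rho1.
exists (L - nu * (msize sg)%:R), sg; split; last by rewrite addrC subrK.
rewrite pcoef_subst_mono (@fsbig_single _ _ _ _ sg).
- by rewrite ycoef_lead mulr1 addrK.
- move=> sg' _ ne_sg; apply/eqP; apply: contraT; rewrite mulf_eq0 negb_or.
  rewrite subrK => /andP[nz' /ycoef_supp le_sg].
  have /max_sg : onL sg' by [].
  rewrite lerN2 ler_nat leqNgt msize_lt //.
  by apply/eqP => eq_sg; apply: ne_sg.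
- by case; exists (L - nu * (msize sg)%:R + eps o * (mweight sg)%:R).
Qed.

(* Only the points of E_nu(P) reach (L, 0), each with the constant term of its
   expansion [ycoef0]. *)
Lemma charpoly_horner_subst P c L :
  finite_set (dsupp P) -> is_min_level o nu P L ->
  (charpoly o P nu).[c] = pcoef o (subst o P (mono c nu)) L mz.
Proof.
move=> finP minP; rewrite /charpoly pcoef_subst_mono msize0 mulr0 addr0.
pose onL := [set ar : R * mexp n | pcoef o P ar.1 ar.2 != 0 /\
                                   nu * (msize ar.2)%:R + ar.1 = L].
have -> : [set ar : R * mexp n | pcoef o P ar.1 ar.2 != 0 /\
            Eface o P nu (ar.1, (msize ar.2)%:R)] = onL.
  by apply/seteqP; split => ar /= [nz]; move/(Eface_cloudE minP nz).
have fin_onL : finite_set onL.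
  apply: (sub_finite_set (B := [set (L - nu * (msize sg)%:R, sg) | sg in dsupp P])).
    move=> [alpha rho] [/= nz eqL]; exists rho; first by exists (alpha + eps o * (mweight rho)%:R).
    by congr pair; lra.
  exact: finite_image.
rewrite fsbig_finite // horner_sum -fsbig_finite //.
rewrite (reindex_fsbig (fun sg : mexp n => (L - nu * (msize sg)%:R, sg))
   [set sg | pcoef o P (L - nu * (msize sg)%:R) sg != 0] onL); last first.
  split=> [sg /= nz|sg1 sg2 _ _ []|[alpha rho] [/= nz eqL]] //.
    by split=> //; rewrite addrC subrK.
  by exists rho; rewrite /= -eqL addrC addKr.
rewrite (fsbig_widen [set sg | pcoef o P (L - nu * (msize sg)%:R) sg != 0] (dsupp P)).
- apply: eq_fsbigr => sg _ /=.
  rewrite ycoef0 hornerZ hornerXn -mulrA; congr (_ * _).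
  under [RHS]eq_bigr do rewrite exprMn.
  by rewrite big_split /= prodrXr mulrC.
- by move=> sg /= nz; exists (L - nu * (msize sg)%:R + eps o * (mweight sg)%:R).
- move=> sg /= [_ /negP]; rewrite negbK => /eqP ->.
  by rewrite mul0r scale0r horner0.
Qed.

Lemma root_charpoly_subst P c : is_dpoly P -> dpoly_nonzero P ->
  root (charpoly o P nu) c <-> lowest_point_ge1 o (subst o P (mono c nu)) nu.
Proof.
move=> dP nzP; have [L minP] := exists_min_level o nu dP nzP.
rewrite (lowest_point_ge1_iff (subst_min_level c dP.1 minP)).
by rewrite /root (charpoly_horner_subst c dP.1 minP); split => /eqP.
Qed.

End MonomialSubstitution.

Section BaseVertex.
Variables (R : realType) (n : nat) (o : opkind R).
Implicit Types (P : dpoly R n) (c : R[i]) (nu : R).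
Local Notation mz := (Defs.mzero n).

Definition base_vertex nu P a0 :=
  pcoef o P a0 mz != 0 /\
  forall alpha rho, pcoef o P alpha rho != 0 -> a0 <= nu * (msize rho)%:R + alpha.

Lemma base_vertex_not_lowest nu P a0 :
  base_vertex nu P a0 -> ~ lowest_point_ge1 o P nu.
Proof.
move=> [nz lb]; have minP : is_min_level o nu P a0.
  by split=> //; exists a0, mz; rewrite msize0 mulr0 add0r.
by move/(lowest_point_ge1_iff minP)/eqP; rewrite (negbTE nz).
Qed.

Lemma not_root_base_vertex nu P c : is_dpoly P -> dpoly_nonzero P ->
  ~~ root (charpoly o P nu) c -> exists a0, base_vertex nu (subst o P (mono c nu)) a0.
Proof.
move=> dP nzP; have [L minP] := exists_min_level o nu dP nzP.
rewrite /root (charpoly_horner_subst c dP.1 minP) => nz.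
by exists L; split => //; case: (subst_min_level c dP.1 minP).
Qed.

(* The nu'-level of a point of P[c x^nu'] is that of the point of P it comes from,
   which exceeds its nu-level unless that point has height 0. *)
Lemma base_vertex_subst nu nu' P c a0 : nu < nu' ->
  base_vertex nu P a0 -> base_vertex nu' (subst o P (mono c nu')) a0.
Proof.
move=> lt_nu [nz lb]; split=> [|alpha rho].
  rewrite pcoef_subst_mono (@fsbig_single _ _ _ _ mz).
  - by rewrite ycoef_lead msize0 mulr0 addr0 subr0 mulr1.
  - move=> sg _ ne_sg; apply/eqP; apply: contraT; rewrite mulf_eq0 negb_or.
    move=> /andP[/lb + _]; rewrite msize0 mulr0 addr0.
    have : 0 < (msize sg)%:R :> R by rewrite ltr0n lt0n msize_eq0; apply/eqP.
    by nra.
  - by rewrite msize0 mulr0 addr0 subr0 => -[]; exists (a0 + eps o * (mweight mz)%:R).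
rewrite pcoef_subst_mono => /fsbig_neq0 [sg _].
rewrite mulf_eq0 negb_or => /andP[/lb le_sg _].
have : 0 <= (msize sg)%:R :> R by exact: ler0n.
by nra.
Qed.

End BaseVertex.

Section Pseq.
Variables (R : realType) (n : nat) (o : opkind R) (P : dpoly R n).
Variables (c : nat -> R[i]) (nu : nat -> R).

Lemma Pseq_dpoly : is_dpoly P -> dpoly_nonzero P ->
  forall i, is_dpoly (Pseq o P c nu i) /\ dpoly_nonzero (Pseq o P c nu i).
Proof.
move=> dP nzP; elim=> [|i [dPi nzPi]] //=.
have [L minP] := exists_min_level o (nu i) dPi nzPi.
split; first exact: subst_mono_dpoly.
exact: min_level_nonzero (subst_min_level (c i) dPi.1 minP).
Qed.

Lemma base_vertex_Pseq i d a0 :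
  (forall l, (i <= l < i + d)%N -> nu l < nu l.+1) ->
  base_vertex o (nu i) (Pseq o P c nu i.+1) a0 ->
  base_vertex o (nu (i + d)) (Pseq o P c nu (i + d).+1) a0.
Proof.
elim: d => [|d IH] incr bv; first by rewrite addn0.
rewrite addnS; apply: base_vertex_subst; first by apply: incr; lia.
by apply: IH bv => l hl; apply: incr; lia.
Qed.

End Pseq.

Theorem lemma4 (R : realType) (o : opkind R) (n : nat) (P : dpoly R n)
  (k : nat) (c : nat -> R[i]) (nu : nat -> R) :
  op_ok o ->
  is_dpoly P -> dpoly_nonzero P ->
  (forall i, (i <= k)%N -> c i != 0) ->
  (forall i j, (i < j)%N -> (j <= k)%N -> nu i < nu j) ->
  admissible o P k c nu <-> lowest_point_ge1 o (Pseq o P c nu k.+1) (nu k).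
Proof.
move=> _ dP nzP _ incr_nu; have dPseq := Pseq_dpoly o c nu dP nzP.
split=> [adm | low i le_ik].
  by apply/(root_charpoly_subst o (nu k) (c k) (dPseq k).1 (dPseq k).2)/adm.
apply: contraT => /(not_root_base_vertex (dPseq i).1 (dPseq i).2) [a0 bv].
have : base_vertex o (nu (i + (k - i))%N) (Pseq o P c nu (i + (k - i))%N.+1) a0.
  by apply: (base_vertex_Pseq _ bv) => l /andP[il lk]; apply: incr_nu; lia.
by rewrite subnKC // => /base_vertex_not_lowest.
Qed.
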